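(* Let $u_0,\dots,u_{n-2}$ be unitaries on $(\mathbb{C}^2)^{\otimes n}$ with $u_t$ acting on qubits $t,t+1$. Define propagators $U_{t_2:t_1}=u_{t_2-1}\cdots u_{t_1}$ if $t_2>t_1$, $U_{t:t}=\mathbb{1}$, and $U_{t_2:t_1}=u_{t_2}^\dagger\cdots u_{t_1-1}^\dagger$ if $t_2<t_1$. For a strictly increasing tuple $\mathbf t=(t_1<\dots<t_M)$ in $\{0,\dots,n-1\}$ let $U_{\mathbf t:0}=U_{t_1:0}U_{t_2:0}\cdots U_{t_M:0}$. Then for any two such tuples $\mathbf t,\mathbf t'$ of the same length $M$, $$U_{\mathbf t:0}=V\,U_{\mathbf s:0},\qquad U_{\mathbf t':0}=W\,U_{\mathbf s:0},$$ where $\mathbf s=(\max(t_1,t'_1),\dots,\max(t_M,t'_M))$ and $$V=\prod_{j:\,t_j<t'_j}U_{t_j:t'_j},\qquad W=\prod_{j:\,t_j>t'_j}U_{t'_j:t_j},$$ with the products ordered from small $j$ on the right to large $j$ on the left. *)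

From mathcomp Require Import all_boot all_order all_algebra.
Set Implicit Arguments. Unset Strict Implicit. Unset Printing Implicit Defensive.
Import Order.TTheory GRing.Theory Num.Theory.
Local Open Scope ring_scope.

(* Operators on (C^2)^{\otimes n} are 2^n x 2^n matrices over a numeric closed
   field C (e.g. the complex numbers).  A basis index i : 'I_(2^n) encodes the
   bit string whose k-th bit (qubit k) is [qbit i k]. *)
Definition qbit (i : nat) (k : nat) : bool := odd (i %/ 2 ^ k).

Definition adj {C : numClosedFieldType} {m} (A : 'M[C]_m) : 'M[C]_m :=
  (map_mx Num.conj A)^T.

Definition unitary {C : numClosedFieldType} {m} (A : 'M[C]_m) : Prop :=
  A *m adj A = 1%:M /\ adj A *m A = 1%:M.

Definition pair_idx (i t : nat) : 'I_4 := inord (qbit i t + 2 * qbit i t.+1)%N.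

(* A acts on qubits t, t+1 only: A = g (on qubits t,t+1) tensor identity on
   the remaining qubits. *)
Definition acts_on_pair {C : numClosedFieldType} (n t : nat)
    (A : 'M[C]_(2 ^ n)) : Prop :=
  exists g : 'M[C]_4, forall i j : 'I_(2 ^ n),
    A i j = if [forall k : 'I_n, ((k != t :> nat) && (k != t.+1 :> nat))
                                   ==> (qbit i k == qbit j k)]
            then g (pair_idx i t) (pair_idx j t) else 0.

Definition mprod {C : numClosedFieldType} {m} (s : seq 'M[C]_m) : 'M[C]_m :=
  foldr (fun A B => A *m B) 1%:M s.

Definition prop {C : numClosedFieldType} {m} (u : nat -> 'M[C]_m)
    (t2 t1 : nat) : 'M[C]_m :=
  if (t1 <= t2)%N then
    mprod [seq u k | k <- rev (iota t1 (t2 - t1))]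
  else
    mprod [seq adj (u k) | k <- iota t2 (t1 - t2)].

Definition prop_tuple {C : numClosedFieldType} {m} (u : nat -> 'M[C]_m)
    (M : nat) (t : nat -> nat) : 'M[C]_m :=
  mprod [seq prop u (t j) 0 | j <- iota 0 M].

From mathcomp Require Import all_boot all_order all_algebra.
From mathcomp Require Import zify.
Set Implicit Arguments. Unset Strict Implicit. Unset Printing Implicit Defensive.
Import Order.TTheory GRing.Theory Num.Theory.
Local Open Scope ring_scope.

(* If t_j < t'_j then unitarity of the gates gives U_{t_j:0} = U_{t_j:t'_j} U_{t'_j:0}.
   The factor U_{t_j:t'_j} consists of gates u_k^dagger with k >= t_j, while every
   earlier factor U_{t_i:0}, i < j, consists of gates u_l with l < t_i < t_j; these act
   on disjoint pairs of qubits, hence commute, so U_{t_j:t'_j} moves to the far left. *)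

Lemma qbit0 i : qbit i 0 = odd i.
Proof. by rewrite /qbit expn0 divn1. Qed.

Lemma qbitS i m : qbit i m.+1 = qbit i./2 m.
Proof. by rewrite /qbit expnS divnMA divn2. Qed.

Lemma qbit_inj n i j : (i < 2 ^ n)%N -> (j < 2 ^ n)%N ->
  (forall m, (m < n)%N -> qbit i m = qbit j m) -> i = j.
Proof.
elim: n i j => [|n IHn] i j; first by rewrite expn0; case: i => //; case: j.
rewrite expnS => lt_i lt_j eq_ij.
have eq_half : i./2 = j./2.
  apply: IHn => [||m lt_m]; rewrite -?qbitS ?eq_ij //; rewrite -divn2; lia.
have eq_odd : odd i = odd j by rewrite -!qbit0 eq_ij.
by rewrite -(odd_double_half i) -(odd_double_half j) eq_odd eq_half.
Qed.

Lemma exists_qbits n (b : nat -> bool) :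
  exists2 k, (k < 2 ^ n)%N & forall m, (m < n)%N -> qbit k m = b m.
Proof.
elim: n b => [|n IHn] b; first by exists 0%N.
have [k lt_k bits_k] := IHn (fun m => b m.+1).
have half_k : (b 0%N + k.*2)./2 = k by rewrite half_bit_double.
exists (b 0%N + k.*2)%N => [|[|m] lt_m].
- by rewrite expnS; case: (b 0%N) => /=; lia.
- by rewrite qbit0 oddD odd_double addbF oddb.
- by rewrite qbitS half_k bits_k.
Qed.

Definition agree_on n (P : pred nat) (i j : nat) : bool :=
  [forall m : 'I_n, P m ==> (qbit i m == qbit j m)].

Lemma agree_onP n (P : pred nat) i j :
  reflect (forall m, (m < n)%N -> P m -> qbit i m = qbit j m) (agree_on n P i j).
Proof.
apply: (iffP forallP) => [agree m lt_m Pm | agree m].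
  by apply/eqP; apply: (implyP (agree (Ordinal lt_m))).
by apply/implyP => Pm; apply/eqP/agree.
Qed.

Lemma eq_agree_on n (P Q : pred nat) i j : P =1 Q -> agree_on n P i j = agree_on n Q i j.
Proof. by move=> eqPQ; apply: eq_forallb => m; rewrite eqPQ. Qed.

Section LocalOperators.
Variables (C : numClosedFieldType) (n : nat).

Definition local_mx (P : pred nat) (A : 'M[C]_(2 ^ n)) : Prop :=
  exists2 f : nat -> nat -> C,
    (forall i i' j j', agree_on n P i i' -> agree_on n P j j' -> f i j = f i' j') &
    forall i j : 'I_(2 ^ n), A i j = if agree_on n (predC P) i j then f i j else 0.

Section DisjointSupports.
Variables (P Q : pred nat) (A B : 'M[C]_(2 ^ n)) (f h : nat -> nat -> C).
Hypothesis disjointPQ : forall m, P m -> ~~ Q m.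
Hypothesis f_local :
  forall i i' j j', agree_on n P i i' -> agree_on n P j j' -> f i j = f i' j'.
Hypothesis h_local :
  forall i i' j j', agree_on n Q i i' -> agree_on n Q j j' -> h i j = h i' j'.
Hypothesis A_entries :
  forall i j : 'I_(2 ^ n), A i j = if agree_on n (predC P) i j then f i j else 0.
Hypothesis B_entries :
  forall i j : 'I_(2 ^ n), B i j = if agree_on n (predC Q) i j then h i j else 0.

Lemma mulmx_disjoint_supports i j :
  (A *m B) i j = if agree_on n (predC (predU P Q)) i j then f i j * h i j else 0.
Proof.
(* Only the index k0 carrying the P-bits of j and the other bits of i contributes. *)
have [k0 lt_k0 bits_k0] :=
  exists_qbits n (fun m => if P m then qbit j m else qbit i m).
rewrite mxE (bigD1 (Ordinal lt_k0)) //= big1 ?addr0 => [|k neq_k_k0]; rewrite A_entries B_entries.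
  have -> : agree_on n (predC P) i k0.
    by apply/agree_onP => m lt_m /negbTE Pm; rewrite bits_k0 // Pm.
  have -> : agree_on n (predC Q) k0 j = agree_on n (predC (predU P Q)) i j.
    apply/agree_onP/agree_onP => /= agree m lt_m.
      by move=> /norP[/negbTE Pm Qm]; rewrite -agree // bits_k0 // Pm.
    move=> Qm; rewrite bits_k0 //; case: ifP => // /negbT Pm.
    by apply: agree; rewrite // negb_or Pm.
  case: ifP => _; last by rewrite mulr0.
  congr (_ * _); [apply: f_local | apply: h_local]; apply/agree_onP => m lt_m.
  - by [].
  - by move=> Pm; rewrite bits_k0 // Pm.
  - by move=> Qm; rewrite bits_k0 // ifN // (contraL (@disjointPQ m)).
  - by [].
case: ifP => [/agree_onP agree_ik | _]; last by rewrite mul0r.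
case: ifP => [/agree_onP agree_kj | _]; last by rewrite mulr0.
case/eqP: neq_k_k0; apply/val_inj/(qbit_inj (ltn_ord k) lt_k0) => m lt_m.
rewrite bits_k0 //; case: ifP => Pm; last by rewrite agree_ik //= Pm.
by rewrite agree_kj //= disjointPQ.
Qed.

End DisjointSupports.

Lemma local_mx_commute (P Q : pred nat) (A B : 'M[C]_(2 ^ n)) :
  (forall m, P m -> ~~ Q m) -> local_mx P A -> local_mx Q B -> A *m B = B *m A.
Proof.
move=> disjointPQ [f f_local A_entries] [h h_local B_entries].
have disjointQP m : Q m -> ~~ P m by apply: contraL (@disjointPQ m).
apply/matrixP => i j.
rewrite (mulmx_disjoint_supports disjointPQ f_local h_local A_entries B_entries).
rewrite (mulmx_disjoint_supports disjointQP h_local f_local B_entries A_entries).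
by rewrite mulrC (@eq_agree_on _ _ (predC (predU Q P))) // => m /=; rewrite orbC.
Qed.

End LocalOperators.

Lemma pair_idx_agree n t i i' : (t.+1 < n)%N ->
  agree_on n (pred2 t t.+1) i i' -> pair_idx i t = pair_idx i' t.
Proof.
move=> lt_t /agree_onP agree.
by rewrite /pair_idx !agree //= ?eqxx ?orbT // ltnW.
Qed.

Lemma acts_on_pair_local (C : numClosedFieldType) n t (A : 'M[C]_(2 ^ n)) :
  (t.+1 < n)%N -> acts_on_pair t A -> local_mx (pred2 t t.+1) A.
Proof.
move=> lt_t [g A_entries].
exists (fun i j => g (pair_idx i t) (pair_idx j t)).
  by move=> i i' j j' /(pair_idx_agree lt_t)-> /(pair_idx_agree lt_t)->.
move=> i j; rewrite A_entries; congr (if _ then _ else _).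
by apply: eq_forallb => k; rewrite /= negb_or.
Qed.

Lemma acts_on_pair_commute (C : numClosedFieldType) n p q (A B : 'M[C]_(2 ^ n)) :
  (p.+1 < q)%N -> (q.+1 < n)%N -> acts_on_pair p A -> acts_on_pair q B ->
  A *m B = B *m A.
Proof.
move=> lt_pq lt_q /acts_on_pair_local-A_local /acts_on_pair_local-B_local.
apply: local_mx_commute (A_local _) (B_local lt_q); last by lia.
by move=> m /pred2P[]-> /=; apply/norP; split; apply/eqP; lia.
Qed.

Section Products.
Variables (C : numClosedFieldType) (m : nat).
Implicit Types (A B : 'M[C]_m) (s : seq 'M[C]_m).

Lemma mprod_cat s1 s2 : mprod (s1 ++ s2) = mprod s1 *m mprod s2.
Proof. by elim: s1 => [|A s1 IHs] /=; rewrite ?mul1mx // IHs mulmxA. Qed.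

Lemma mprod_commute A s :
  (forall B, B \in s -> A *m B = B *m A) -> A *m mprod s = mprod s *m A.
Proof.
elim: s => [|B s IHs] commA /=; first by rewrite mulmx1 mul1mx.
rewrite mulmxA commA ?mem_head // -!mulmxA IHs // => B' sB'.
by apply: commA; rewrite in_cons sB' orbT.
Qed.

Lemma mprod_commute2 s1 s2 :
  (forall A B, A \in s1 -> B \in s2 -> A *m B = B *m A) ->
  mprod s1 *m mprod s2 = mprod s2 *m mprod s1.
Proof.
move=> comm12; apply/esym/mprod_commute => B s2B.
by apply/esym/mprod_commute => A s1A; apply: comm12.
Qed.

Lemma unitary_commute_adj A B :
  unitary B -> A *m B = B *m A -> adj B *m A = A *m adj B.
Proof.
move=> [BBadj BadjB] commAB.
by rewrite -[adj B *m A]mulmx1 -BBadj !mulmxA -(mulmxA _ A) commAB mulmxA BadjB mul1mx.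
Qed.

End Products.

Lemma rev_iotaS0 k : rev (iota 0 k.+1) = k :: rev (iota 0 k).
Proof. by rewrite -addn1 iotaD rev_cat. Qed.

Section Propagators.
Variables (C : numClosedFieldType) (m : nat) (u : nat -> 'M[C]_m).

Lemma prop_forward t : prop u t 0 = mprod [seq u k | k <- rev (iota 0 t)].
Proof. by rewrite /prop subn0. Qed.

Lemma prop_backward t t' : (t <= t')%N ->
  prop u t t' = mprod [seq adj (u k) | k <- iota t (t' - t)].
Proof.
rewrite /prop leq_eqVlt => /orP[/eqP-> | lt_tt']; first by rewrite leqnn subnn.
by rewrite leqNgt lt_tt'.
Qed.

Lemma prop_forwardS t : prop u t.+1 0 = u t *m prop u t 0.
Proof. by rewrite !prop_forward rev_iotaS0. Qed.

Lemma prop_backwardS t t' : (t <= t')%N -> prop u t t'.+1 = prop u t t' *m adj (u t').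
Proof.
move=> le_tt'; rewrite !prop_backward ?(leqW le_tt') // subSn //.
by rewrite -addn1 iotaD map_cat mprod_cat subnKC //= mulmx1.
Qed.

Lemma prop_tupleS M t : prop_tuple u M.+1 t = prop_tuple u M t *m prop u (t M) 0.
Proof. by rewrite /prop_tuple -addn1 iotaD map_cat mprod_cat /= mulmx1. Qed.

End Propagators.

Section Circuit.
Variables (C : numClosedFieldType) (n : nat) (u : nat -> 'M[C]_(2 ^ n)).
Hypothesis hu : forall k, (k.+1 < n)%N -> unitary (u k) /\ acts_on_pair k (u k).

Lemma prop_cancel t t' : (t <= t')%N -> (t' < n)%N ->
  prop u t t' *m prop u t' 0 = prop u t 0.
Proof.
move=> /subnKC <-; elim: (t' - t)%N => [|d IHd] lt_n; rewrite ?addnS in lt_n *.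
  by rewrite addn0 prop_backward // subnn mul1mx.
have [[_ adjK] _] := hu lt_n.
rewrite prop_backwardS ?leq_addr // prop_forwardS -mulmxA (mulmxA (adj _)) adjK.
by rewrite mul1mx IHd // ltnW.
Qed.

Lemma prop_commute c a b : (c < a)%N -> (a <= b)%N -> (b < n)%N ->
  prop u a b *m prop u c 0 = prop u c 0 *m prop u a b.
Proof.
move=> lt_ca le_ab lt_bn; rewrite prop_forward prop_backward //.
apply: mprod_commute2 => _ _ /mapP[k k_in ->] /mapP[l l_in ->].
move: k_in l_in; rewrite mem_rev !mem_iota => /andP[le_ak lt_kb] /andP[_ lt_lc].
have [unitary_k act_k] : unitary (u k) /\ acts_on_pair k (u k) by apply: hu; lia.
have [_ act_l] : unitary (u l) /\ acts_on_pair l (u l) by apply: hu; lia.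
apply: unitary_commute_adj unitary_k _.
by apply: acts_on_pair_commute act_l act_k; lia.
Qed.

Lemma prop_tuple_commute M t a b : (forall j, (j < M)%N -> (t j < a)%N) ->
  (a <= b)%N -> (b < n)%N ->
  prop u a b *m prop_tuple u M t = prop_tuple u M t *m prop u a b.
Proof.
move=> lt_ta le_ab lt_bn; apply: mprod_commute => _ /mapP[j j_in ->].
by apply: prop_commute => //; apply: lt_ta; rewrite mem_iota in j_in.
Qed.

Lemma prop_tuple_max M (t t' s : nat -> nat) :
  (forall j, (j < M)%N -> (t' j < n)%N) ->
  (forall i j, (i < j)%N -> (j < M)%N -> (t i < t j)%N) ->
  (forall j, s j = maxn (t j) (t' j)) ->
  prop_tuple u M t =
    mprod [seq prop u (t j) (t' j) | j <- rev (iota 0 M) & (t j < t' j)%N]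
    *m prop_tuple u M s.
Proof.
move=> + + def_s; elim: M => [|M IHM] lt_t'n incr_t; first by rewrite mul1mx.
have {}IHM := IHM (fun j lt_j => lt_t'n j (ltnW lt_j))
  (fun i j lt_ij lt_j => incr_t i j lt_ij (ltnW lt_j)).
rewrite !prop_tupleS rev_iotaS0 /= def_s.
case: ltnP => [lt_tt' | _] /=; last by rewrite mulmxA -IHM.
rewrite -(prop_cancel (ltnW lt_tt') (lt_t'n _ _)) //.
rewrite mulmxA -prop_tuple_commute ?(ltnW lt_tt') ?lt_t'n // => [|j lt_j].
  by rewrite IHM !mulmxA.
exact: incr_t.
Qed.

End Circuit.

Theorem lemmaA1 (C : numClosedFieldType) (n : nat) (u : nat -> 'M[C]_(2 ^ n))
    (hu : forall k : nat, (k.+1 < n)%N -> unitary (u k) /\ acts_on_pair k (u k))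
    (M : nat) (t t' : nat -> nat)
    (ht_lt : forall j : nat, (j < M)%N -> (t j < n)%N)
    (ht'_lt : forall j : nat, (j < M)%N -> (t' j < n)%N)
    (ht_inc : forall i j : nat, (i < j)%N -> (j < M)%N -> (t i < t j)%N)
    (ht'_inc : forall i j : nat, (i < j)%N -> (j < M)%N -> (t' i < t' j)%N) :
  let s := fun j => maxn (t j) (t' j) in
  let V := mprod [seq prop u (t j) (t' j) | j <- rev (iota 0 M) & (t j < t' j)%N] in
  let W := mprod [seq prop u (t' j) (t j) | j <- rev (iota 0 M) & (t' j < t j)%N] in
  prop_tuple u M t = V *m prop_tuple u M s /\
  prop_tuple u M t' = W *m prop_tuple u M s.
Proof.
move=> s V W; split; first exact: prop_tuple_max.
by apply: prop_tuple_max => // j; rewrite maxnC.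
Qed.
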